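(* Consider a combinatorial auction with $2$ bidders and $2$ items $a,b$, where both bidders have general monotone valuations. Let $\mathcal M_3$ be the randomized mechanism that with probability $1/3$ runs an ascending second-price auction on the grand bundle $\{a,b\}$, and with probability $2/3$ allocates a uniformly random item to a uniformly random bidder and then runs an ascending second-price auction for the remaining item among both bidders. Then $\mathcal M_3$ achieves a $\frac{3}{2}$-approximation to the optimal social welfare: on every instance its expected welfare under truthful play is at least $\frac23\mathrm{OPT}$.
   Context: A valuation $v:2^{\{a,b\}}\to\mathbb{R}_{\ge0}$ is (general) monotone if $v(T)\le v(T')$ whenever $T\subseteq T'$. In the auction for the remaining item, each bidder bids her marginal value for that item given the bundle she already holds; the highest bidder wins. In the grand-bundle auction, the bidder with the highest value for $\{a,b\}$ wins both items. $\mathrm{OPT}$ is the maximum of $v_1(T_1)+v_2(T_2)$ over disjoint $T_1,T_2\subseteq\{a,b\}$. *)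

From HB Require Import structures.
From mathcomp Require Import all_boot all_order all_algebra.
Set Implicit Arguments. Unset Strict Implicit. Unset Printing Implicit Defensive.
Import Order.TTheory GRing.Theory Num.Theory.
Local Open Scope ring_scope.

(* Bidders: bidder 1 = true, bidder 2 = false.
   A valuation profile is v : bool -> {set bool} -> R (v i T = value of bidder i for bundle T). *)
Definition item_a : bool := true.
Definition item_b : bool := false.

Definition monotone_valuation (R : realFieldType) (v : {set bool} -> R) : Prop :=
  (forall T, 0 <= v T) /\ (forall T T' : {set bool}, T \subset T' -> v T <= v T').

(* OPT = max over disjoint (T1, T2) of v1 T1 + v2 T2 (values are >= 0, so 0 is a neutral start) *)
Definition OPT (R : realFieldType) (v : bool -> {set bool} -> R) : R :=
  \big[Num.max/0]_(p : {set bool} * {set bool} | [disjoint p.1 & p.2])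
     (v true p.1 + v false p.2).

(* Ascending second-price auction on the grand bundle {a,b}: the bidder with the
   highest value for {a,b} wins both items (ties broken in favour of bidder 1);
   social welfare of the outcome under truthful play. *)
Definition grand_bundle_welfare (R : realFieldType) (v : bool -> {set bool} -> R) : R :=
  let w := if v false [set item_a; item_b] <= v true [set item_a; item_b] then true else false in
  v w [set item_a; item_b] + v (~~ w) set0.

(* Item x is given to bidder i; then an ascending second-price auction for the
   remaining item y = ~~ x, each bidder bidding her marginal value for y given her
   current bundle; the highest bidder wins (ties broken in favour of i). *)
Definition item_then_auction_welfare (R : realFieldType) (v : bool -> {set bool} -> R)
    (i x : bool) : R :=
  let y := ~~ x in
  let bid_i := v i [set x; y] - v i [set x] in
  let bid_j := v (~~ i) [set y] - v (~~ i) set0 in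
  if bid_j <= bid_i then v i [set x; y] + v (~~ i) set0
  else v i [set x] + v (~~ i) [set y].

Definition M3_expected_welfare (R : realFieldType) (v : bool -> {set bool} -> R) : R :=
  3^-1 * grand_bundle_welfare v
  + (2 / 3) * (\sum_(i : bool) \sum_(x : bool) 4^-1 * item_then_auction_welfare v i x).

From HB Require Import structures.
From mathcomp Require Import all_boot all_order all_algebra.
From mathcomp Require Import lra.
Set Implicit Arguments. Unset Strict Implicit. Unset Printing Implicit Defensive.
Import Order.TTheory GRing.Theory Num.Theory.
Local Open Scope ring_scope.

(* Comparing the two marginal bids for the remaining item is the same as
   comparing the welfare of the two allocations the auction can still reach
   (the first bidder gets both items, or the items are split), so each run of
   that auction is efficient among them.  By monotonicity an optimal
   allocation either gives both items to one bidder or splits them; in both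
   cases the welfare of the five equally weighted outcomes of M_3 (the
   grand-bundle auction counts twice) averages to at least 2/3 of it. *)

Lemma setT_bool (x : bool) : [set x; ~~ x] = setT.
Proof. by apply/setP => y; rewrite !inE; case: x y => -[]. Qed.

Lemma disjoint_bool_cases (T1 T2 : {set bool}) : [disjoint T1 & T2] ->
  [\/ T1 = set0, T2 = set0 | exists x, T1 \subset [set x] /\ T2 \subset [set ~~ x]].
Proof.
move=> T12.
have [->|[x xT1]] := set_0Vmem T1; first by constructor 1.
have [->|[y yT2]] := set_0Vmem T2; first by constructor 2.
have yE : y = ~~ x.
  by case: x y xT1 yT2 => -[] // xT1 yT2; rewrite (disjointFr T12 xT1) in yT2.
constructor 3; exists x; split; apply/subsetP => z zT; rewrite inE; subst y.
- by case: x z {xT1} yT2 zT => -[] //= yT2 zT; rewrite (disjointFr T12 zT) in yT2.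
- by case: x z {yT2} xT1 zT => -[] //= xT1 zT; rewrite (disjointFl T12 zT) in xT1.
Qed.

Section Welfare.

Variables (R : realFieldType) (v : bool -> {set bool} -> R).

Lemma item_then_auction_welfareE i x : item_then_auction_welfare v i x =
  Num.max (v i setT + v (~~ i) set0) (v i [set x] + v (~~ i) [set ~~ x]).
Proof.
rewrite /item_then_auction_welfare setT_bool maxEge.
set bundle := v i setT + _; set split := v i [set x] + _.
have -> : (split <= bundle) = (v (~~ i) [set ~~ x] - v (~~ i) set0 <= v i setT - v i [set x]).
  by rewrite -subr_ge0 -[in RHS]subr_ge0; congr (0 <= _); rewrite /bundle /split; lra.
by case: ifP.
Qed.

Lemma M3_expected_welfareE i x : M3_expected_welfare v =
  3^-1 * grand_bundle_welfare v
  + 6^-1 * (item_then_auction_welfare v i x + item_then_auction_welfare v i (~~ x)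
            + item_then_auction_welfare v (~~ i) x + item_then_auction_welfare v (~~ i) (~~ x)).
Proof.
rewrite /M3_expected_welfare !big_bool.
by case: i; case: x => /=; lra.
Qed.

Hypothesis hv : forall i, monotone_valuation (v i).

Lemma valuation_ge0 i T : 0 <= v i T.
Proof. by case: (hv i). Qed.

Lemma valuation_le i {T T' : {set bool}} : T \subset T' -> v i T <= v i T'.
Proof. by case: (hv i) => _; apply. Qed.

Lemma grand_bundle_welfare_ge i : v i setT <= grand_bundle_welfare v.
Proof.
rewrite /grand_bundle_welfare /item_a /item_b (setT_bool true).
have := valuation_ge0 true set0; have := valuation_ge0 false set0.
by case: ifP; case: i => /=; lra.
Qed.

Lemma bundle_le_item_then_auction i x :
  v i setT + v (~~ i) set0 <= item_then_auction_welfare v i x.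
Proof. by rewrite item_then_auction_welfareE le_max lexx. Qed.

Lemma split_le_item_then_auction i x :
  v i [set x] + v (~~ i) [set ~~ x] <= item_then_auction_welfare v i x.
Proof. by rewrite item_then_auction_welfareE le_max lexx orbT. Qed.

Lemma bundle_allocation_le i :
  2/3 * (v i setT + v (~~ i) set0) <= M3_expected_welfare v.
Proof.
rewrite (M3_expected_welfareE i true).
have := grand_bundle_welfare_ge i.
have := bundle_le_item_then_auction i true; have := bundle_le_item_then_auction i false.
have := bundle_le_item_then_auction (~~ i) true; have := bundle_le_item_then_auction (~~ i) false.
have := valuation_le (~~ i) (sub0set setT); have := valuation_ge0 i set0.
rewrite !negbK; lra.
Qed.

Lemma split_allocation_le i x :
  2/3 * (v i [set x] + v (~~ i) [set ~~ x]) <= M3_expected_welfare v.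
Proof.
rewrite (M3_expected_welfareE i x).
have := grand_bundle_welfare_ge i; have := grand_bundle_welfare_ge (~~ i).
have := split_le_item_then_auction i x.
have := split_le_item_then_auction (~~ i) (~~ x).
have := bundle_le_item_then_auction i (~~ x); have := bundle_le_item_then_auction (~~ i) x.
have := valuation_le i (subsetT [set x]); have := valuation_le (~~ i) (subsetT [set ~~ x]).
have := valuation_ge0 i set0; have := valuation_ge0 (~~ i) set0.
rewrite !negbK; lra.
Qed.

Lemma allocation_welfare_le (T1 T2 : {set bool}) : [disjoint T1 & T2] ->
  2/3 * (v true T1 + v false T2) <= M3_expected_welfare v.
Proof.
case/disjoint_bool_cases => [->|->|[x [sub1 sub2]]].
- have := bundle_allocation_le false; have := valuation_le false (subsetT T2); lra.
- have := bundle_allocation_le true; have := valuation_le true (subsetT T1); lra.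
- have := split_allocation_le true x.
  have := valuation_le true sub1; have := valuation_le false sub2; lra.
Qed.

End Welfare.

Theorem claimB5 (R : realFieldType) (v : bool -> {set bool} -> R)
  (hv : forall i : bool, monotone_valuation (v i)) :
  (2 / 3) * OPT v <= M3_expected_welfare v.
Proof.
have M3_ge0 : 0 <= M3_expected_welfare v.
  have := bundle_allocation_le hv true.
  have := valuation_ge0 hv true setT; have := valuation_ge0 hv false set0; lra.
suff : OPT v <= 3/2 * M3_expected_welfare v by lra.
apply: bigmax_le => [|[T1 T2] /= /(allocation_welfare_le hv)]; lra.
Qed.
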